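(* Let $\{\varphi_\alpha\}$ be a net in $MA(G,\sigma)$ such that (i) $\varphi_\alpha\to1$ pointwise on $G$, (ii) $\sup_\alpha\|M_{\varphi_\alpha}\|<\infty$, and (iii) for each $\alpha$ there is $\kappa_\alpha:G\to[1,\infty)$ such that $G$ is $\kappa_\alpha$-decaying and $\|\varphi_\alpha\kappa_\alpha\|_\infty<\infty$. Then $\{\varphi_\alpha\}$ is a bounded Fourier summing net for $(G,\sigma)$.
   Context: $G$ is a discrete group, $\sigma:G\times G\to\mathbb{T}$ a normalized 2-cocycle ($\sigma(g,h)\sigma(gh,k)=\sigma(h,k)\sigma(g,hk)$, $\sigma(g,e)=\sigma(e,g)=1$); $\Lambda_\sigma(g)$ is the unitary on $\ell^2(G)$ with $(\Lambda_\sigma(g)\xi)(h)=\sigma(g,g^{-1}h)\xi(g^{-1}h)$, $\lambda=\Lambda_1$; $C^*_r(G,\sigma)$ is the operator-norm closure of $\mathrm{span}\,\Lambda_\sigma(G)$; for $x\in C^*_r(G,\sigma)$, $\widehat x=x\delta_e$. For $\varphi:G\to\mathbb{C}$, $M_\varphi$ is the linear map on $\mathrm{span}\,\Lambda_\sigma(G)$ with $M_\varphi(\Lambda_\sigma(g))=\varphi(g)\Lambda_\sigma(g)$; $\varphi\in MA(G,\sigma)$ if it is bounded in operator norm, and then $M_\varphi$ denotes the extension to $C^*_r(G,\sigma)$. $MCF(G,\sigma)$ is the set of $\varphi$ such that $\sum_g\varphi(g)\widehat x(g)\Lambda_\sigma(g)$ converges in operator norm for all $x$. A Fourier summing net for $(G,\sigma)$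 is a net $\{\varphi_\alpha\}\subseteq MCF(G,\sigma)$ with $M_{\varphi_\alpha}(x)\to x$ in norm for all $x\in C^*_r(G,\sigma)$; bounded means $\sup_\alpha\|M_{\varphi_\alpha}\|<\infty$. $\mathcal{K}(G)$ = finitely supported functions, $\pi_\lambda(f)=\sum_g f(g)\lambda(g)$; for $\kappa:G\to[1,\infty)$, $\|\xi\|_{2,\kappa}=\|\xi\kappa\|_2$, and $G$ is $\kappa$-decaying if $f\mapsto\pi_\lambda(f)$ is bounded from $(\mathcal{K}(G),\|\cdot\|_{2,\kappa})$ to $C^*_r(G,1)$ with operator norm. *)

From HB Require Import structures.
From mathcomp Require Import all_boot all_order all_algebra.
From mathcomp Require Import complex.
Import Normc.
From mathcomp Require Import all_classical all_reals all_analysis.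

Set Implicit Arguments.
Unset Strict Implicit.
Unset Printing Implicit Defensive.

Import Order.TTheory GRing.Theory Num.Theory.
Local Open Scope ring_scope.

(* Discrete groups: MathComp's (not necessarily finite) groupType, whose
   carrier is a choiceType. *)

Section TwistedGroupCstar.
Variables (R : realType) (G : groupType).
Local Notation C := R[i].

(* vectors (functions G -> C) and operators on them; only their action on
   l^2(G) is ever looked at *)
Definition vec := G -> C.
Definition op := vec -> vec.

Definition l2sq (xi : vec) : \bar R :=
  (\esum_(g in [set: G]) ((normc (xi g)) ^+ 2)%:E)%E.
Definition l2norm (xi : vec) : \bar R :=
  match l2sq xi with
  | EFin r => (Num.sqrt r)%:E
  | _ => +oo%E
  end.

Definition opnorm (T : op) : \bar R :=
  ereal_sup [set l2norm (T xi) | xi in [set xi | (l2norm xi <= 1%:E)%E]].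

Definition opsub (T S : op) : op := fun xi g => T xi g - S xi g.

Definition is_cocycle (sigma : G -> G -> C) : Prop :=
  [/\ (forall g h, normc (sigma g h) = 1),
      (forall g h k, sigma g h * sigma (g * h)%g k = sigma h k * sigma g (h * k)%g)
    & (forall g, sigma g 1%g = 1 /\ sigma 1%g g = 1)].

Definition trivial_cocycle : G -> G -> C := fun _ _ => 1.

Definition Lambda (sigma : G -> G -> C) (g : G) : op :=
  fun xi h => sigma g (g^-1 * h)%g * xi (g^-1 * h)%g.

(* the element  sum_i c_i Lambda_sigma(g_i)  of span Lambda_sigma(G),
   given by the list of pairs (c_i, g_i) *)
Definition lincomb (sigma : G -> G -> C) (s : seq (C * G)) : op :=
  fun xi h => \sum_(p <- s) p.1 * Lambda sigma p.2 xi h.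

(* M_phi on span Lambda_sigma(G) *)
Definition mult (phi : G -> C) (s : seq (C * G)) : seq (C * G) :=
  [seq (phi p.2 * p.1, p.2) | p <- s].

(* x belongs to C*_r(G,sigma): operator-norm limit of span Lambda_sigma(G) *)
Definition in_Cr (sigma : G -> G -> C) (x : op) : Prop :=
  forall e : R, 0 < e -> exists s, (opnorm (opsub x (lincomb sigma s)) < e%:E)%E.

Definition MAnorm (sigma : G -> G -> C) (phi : G -> C) : \bar R :=
  ereal_sup [set opnorm (lincomb sigma (mult phi s))
            | s in [set s | (opnorm (lincomb sigma s) <= 1%:E)%E]].

Definition in_MA (sigma : G -> G -> C) (phi : G -> C) : Prop :=
  (MAnorm sigma phi < +oo)%E.

(* y = M_phi(x), M_phi being the continuous extension to C*_r(G,sigma) *)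
Definition Mext (sigma : G -> G -> C) (phi : G -> C) (x y : op) : Prop :=
  forall e : R, 0 < e -> exists2 d : R, 0 < d &
    forall s, (opnorm (opsub x (lincomb sigma s)) < d%:E)%E ->
              (opnorm (opsub y (lincomb sigma (mult phi s))) < e%:E)%E.

Definition delta_e : vec := fun g => if g == 1%g then 1 else 0.

Definition hat (x : op) : vec := x delta_e.

(* phi in MCF(G,sigma): sum_g phi(g) \hat x(g) Lambda_sigma(g) converges
   (unconditionally, along the net of finite subsets of G) in operator norm *)
Definition in_MCF (sigma : G -> G -> C) (phi : G -> C) : Prop :=
  forall x, in_Cr sigma x ->
  exists y : op, forall e : R, 0 < e -> exists F0 : seq G,
    forall F : seq G, uniq F -> {subset F0 <= F} ->
      (opnorm (opsub y (lincomb sigma [seq ((phi g * hat x g)%R, g) | g <- F]))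
         < e%:E)%E.

Definition decaying (kappa : G -> R) : Prop :=
  exists K : R, forall (F : seq G) (f : G -> C), uniq F ->
    (opnorm (lincomb trivial_cocycle [seq (f g, g) | g <- F])
      <= (K * Num.sqrt (\sum_(g <- F) (normc (f g) * kappa g) ^+ 2))%R%:E)%E.

End TwistedGroupCstar.

Definition directed (A : Type) (le : A -> A -> Prop) : Prop :=
  [/\ inhabited A, (forall a, le a a),
      (forall a b c, le a b -> le b c -> le a c)
    & (forall a b, exists c, le a c /\ le b c)].

Definition bounded_Fourier_summing_net (R : realType) (G : groupType)
    (sigma : G -> G -> R[i]) (A : Type) (le : A -> A -> Prop)
    (phi : A -> G -> R[i]) : Prop :=
  [/\ (forall a, in_MCF sigma (phi a)),
      (exists B : R, forall a, (MAnorm sigma (phi a) <= B%:E)%E),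
      (forall a x, in_Cr sigma x -> exists y, Mext sigma (phi a) x y)
    & (forall x, in_Cr sigma x -> forall e : R, 0 < e ->
        exists a0, forall a, le a0 a ->
          forall y, Mext sigma (phi a) x y ->
            (opnorm (opsub y x) < e%:E)%E)].

(* Partial Fourier sums are controlled by the untwisted operator: pointwise,
   |(sum_g c_g Lambda_sigma(g)) xi| <= (sum_g |c_g| lambda(g)) |xi|.  With
   kappa-decay and sup |phi kappa| < oo this bounds the operator norm of
   sum_(g in F) phi(g) \hat x(g) Lambda_sigma(g) by a constant times the l^2-norm
   of \hat x on F; as \hat x is in l^2(G), the partial sums form a Cauchy net,
   hence converge by completeness.  The uniform bound on ||M_phi_a|| lets each
   M_phi_a extend to C*_r(G,sigma) and reduces, by an e/3 argument, the
   convergence M_phi_a(x) -> x to elements of the algebraic span, where it is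
   the pointwise convergence phi_a -> 1 on a finite support. *)
From HB Require Import structures.
From mathcomp Require Import all_boot all_order all_algebra.
From mathcomp Require Import complex.
Import Normc.
From mathcomp Require Import all_classical all_reals all_analysis.
From mathcomp Require Import ring lra.
Import Order.TTheory GRing.Theory Num.Theory.
Local Open Scope ring_scope.
Local Open Scope classical_set_scope.
Local Open Scope complex_scope.
Set Implicit Arguments.
Unset Strict Implicit.
Unset Printing Implicit Defensive.

Lemma normc_ge0 (R : rcfType) (z : R[i]) : 0 <= normc z.
Proof. by case: z => a b; rewrite /normc sqrtr_ge0. Qed.

Lemma normcR (R : rcfType) (x : R) : normc (x%:C) = `|x|.
Proof. by rewrite /normc /= expr0n /= addr0 sqrtr_sqr. Qed.

Lemma sqrtr_le_sqr (R : rcfType) (a r : R) : 0 <= a -> 0 <= r ->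
  (Num.sqrt a <= r) = (a <= r ^+ 2).
Proof.
move=> a0 r0; rewrite -{1}(@ger0_norm _ r) // -sqrtr_sqr ler_sqrt //.
exact: sqr_ge0.
Qed.

Lemma sqr_addr_le_weighted (R : realFieldType) (t X Y : R) : 0 < t ->
  (X + Y) ^+ 2 <= (1 + t) * X ^+ 2 + (1 + t^-1) * Y ^+ 2.
Proof.
move=> t0; have h : 0 <= t^-1 * (t * X - Y) ^+ 2.
  by apply: mulr_ge0; [rewrite invr_ge0 ltW | exact: sqr_ge0].
have expand : t^-1 * (t * X - Y) ^+ 2 = t * X ^+ 2 - 2 * X * Y + t^-1 * Y ^+ 2.
  by field; rewrite gt_eqF.
rewrite expand in h; nra.
Qed.

Lemma archi_inv_lt (R : archiRealFieldType) (c e : R) : 0 <= c -> 0 < e ->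
  exists n : nat, c * n.+1%:R^-1 < e.
Proof.
move=> c0 e0; exists (Num.bound (c / e)).
set k := Num.bound (c / e).
have hk : c / e < k%:R by apply: archi_boundP; apply: divr_ge0 => //; exact: ltW.
have k1 : (k%:R : R) < k.+1%:R by rewrite ltr_nat.
have kp : (0 : R) < k.+1%:R by rewrite ltr0n.
by rewrite ltr_pdivrMr // -ltr_pdivrMl // mulrC; exact: lt_trans hk k1.
Qed.

Lemma invSn_le (R : numFieldType) (n m : nat) :
  (n <= m)%N -> m.+1%:R^-1 <= n.+1%:R^-1 :> R.
Proof. by move=> nm; rewrite lef_pV2 ?posrE ?ltr0n // ler_nat. Qed.

Lemma normc_le_ReIm (R : rcfType) (a b : R) : normc (a +i* b) <= `|a| + `|b|.
Proof.
rewrite /= sqrtr_le_sqr ?addr_ge0 ?normr_ge0 ?sqr_ge0 //.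
have ha := real_normK (num_real a); have hb := real_normK (num_real b).
have : 0 <= `|a| * `|b| by rewrite mulr_ge0.
nra.
Qed.

Lemma normr_Re_le_normc (R : rcfType) (z : R[i]) : `|complex.Re z| <= normc z.
Proof.
by case: z => a b /=; rewrite -sqrtr_sqr ler_wsqrtr // lerDl; exact: sqr_ge0.
Qed.

Lemma normr_Im_le_normc (R : rcfType) (z : R[i]) : `|complex.Im z| <= normc z.
Proof.
by case: z => a b /=; rewrite -sqrtr_sqr ler_wsqrtr // lerDr; exact: sqr_ge0.
Qed.

Section L2Bounds.
Variables (R : realType) (G : groupType).
Local Notation C := R[i].
Implicit Types (xi : G -> C) (D : seq G) (T S : op R G).

Definition sqsum xi D : R := \sum_(g <- D) normc (xi g) ^+ 2.

(* ||xi||_2 <= r, phrased through the finite partial sums so that no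
   summability has to be established *)
Definition l2_le xi (r : R) :=
  0 <= r /\ forall D, uniq D -> Num.sqrt (sqsum xi D) <= r.

Definition op_le T (r : R) := forall xi, l2_le xi 1 -> l2_le (T xi) r.

Lemma sqsum_ge0 xi D : 0 <= sqsum xi D.
Proof. by apply: sumr_ge0 => g _; rewrite exprn_ge0 // normc_ge0. Qed.

Lemma l2sq_ge0 xi : (0 <= l2sq xi)%E.
Proof. by apply: esum_ge0 => g _; rewrite lee_fin exprn_ge0 // normc_ge0. Qed.

Lemma l2sq_le xi c : (forall D, uniq D -> sqsum xi D <= c) -> (l2sq xi <= c%:E)%E.
Proof.
move=> H; apply: ge_ereal_sup => _ [X [finX _] <-].
rewrite fsbig_finite //= sumEFin lee_fin; apply: H; exact: finmap.fset_uniq.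
Qed.

Lemma sqsum_le_l2sq xi D : uniq D -> ((sqsum xi D)%:E <= l2sq xi)%E.
Proof.
move=> uD; apply: ereal_sup_ubound; exists [set` D].
  by split; [exact: finite_seq|].
by rewrite -fsbig_seq // sumEFin.
Qed.

Lemma l2norm_leP xi r : (l2norm xi <= r%:E)%E <-> l2_le xi r.
Proof.
rewrite /l2norm; have := l2sq_ge0 xi; have := @sqsum_le_l2sq xi.
have := @l2sq_le xi (r ^+ 2).
case: (l2sq xi) => [q| |] // Hle Hge q0; split.
- rewrite lee_fin => H; have r0 : 0 <= r by apply: le_trans H; exact: sqrtr_ge0.
  split=> // D uD; rewrite (le_trans _ H) // ler_wsqrtr //.
  by have := Hge D uD; rewrite lee_fin.
- case=> r0 H; rewrite lee_fin sqrtr_le_sqr -?lee_fin //.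
  by apply: Hle => D uD; rewrite -sqrtr_le_sqr ?sqsum_ge0 //; exact: H.
- by [].
- case=> r0 H; suff : (+oo <= (r ^+ 2)%:E)%E by [].
  by apply: Hle => D uD; rewrite -sqrtr_le_sqr ?sqsum_ge0 //; exact: H.
Qed.

Lemma opnorm_leP T r : (opnorm T <= r%:E)%E <-> op_le T r.
Proof.
split.
- move=> H xi /l2norm_leP xi1; apply/l2norm_leP; apply: le_trans H.
  by apply: ereal_sup_ubound; exists xi.
- move=> H; apply: ge_ereal_sup => _ [xi /l2norm_leP xi1 <-].
  by apply/l2norm_leP; exact: H.
Qed.

(* Minkowski, from the weighted bound above with t close to B/A. *)
Lemma sqrt_sqsumD (a b : G -> C) D :
  Num.sqrt (sqsum (fun h => a h + b h) D) <=
  Num.sqrt (sqsum a D) + Num.sqrt (sqsum b D).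
Proof.
apply/ler_addgt0Pr => e e0.
set A := Num.sqrt (sqsum a D); set B := Num.sqrt (sqsum b D).
have A0 : 0 <= A by exact: sqrtr_ge0.
have B0 : 0 <= B by exact: sqrtr_ge0.
set s1 := A + e / 2; set s2 := B + e / 2.
have s10 : 0 < s1 by rewrite /s1; lra.
have s20 : 0 < s2 by rewrite /s2; lra.
set t := s2 / s1.
have t0 : 0 < t by rewrite divr_gt0.
have weighted : sqsum (fun h => a h + b h) D <=
    (1 + t) * sqsum a D + (1 + t^-1) * sqsum b D.
  rewrite /sqsum !mulr_sumr -big_split /=; apply: ler_sum => g _.
  apply: le_trans (sqr_addr_le_weighted _ _ t0).
  by apply: lerXn2r; rewrite ?nnegrE ?addr_ge0 ?normc_ge0 // le_normcD.
have Ha : sqsum a D <= s1 ^+ 2.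
  by rewrite -sqrtr_le_sqr ?sqsum_ge0 ?(ltW s10) // -/A /s1; lra.
have Hb : sqsum b D <= s2 ^+ 2.
  by rewrite -sqrtr_le_sqr ?sqsum_ge0 ?(ltW s20) // -/B /s2; lra.
rewrite sqrtr_le_sqr ?sqsum_ge0; last lra.
apply: (le_trans weighted).
have -> : A + B + e = s1 + s2 by rewrite /s1 /s2; field.
apply: le_trans (_ : (1 + t) * s1 ^+ 2 + (1 + t^-1) * s2 ^+ 2 <= _).
  by apply: lerD; apply: ler_wpM2l => //; apply: addr_ge0;
    rewrite // ?invr_ge0 ltW.
rewrite /t invf_div le_eqVlt; apply/orP; left; apply/eqP; field.
all: by rewrite ?gt_eqF.
Qed.

Lemma sqsum_le_size v D c : 0 <= c -> (forall h, normc (v h) <= c) ->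
  Num.sqrt (sqsum v D) <= (size D)%:R * c.
Proof.
move=> c0 H; rewrite sqrtr_le_sqr ?sqsum_ge0 ?mulr_ge0 //; elim: D => [|g D IH].
  by rewrite /sqsum big_nil mul0r expr0n.
rewrite /sqsum big_cons -/(sqsum v D) /= -natr1 mulrDl mul1r.
have hg : normc (v g) ^+ 2 <= c ^+ 2.
  by apply: lerXn2r; rewrite ?nnegrE ?normc_ge0.
have : 0 <= (size D)%:R * c by rewrite mulr_ge0.
nra.
Qed.

Lemma l2_le_trans xi r r' : l2_le xi r -> r <= r' -> l2_le xi r'.
Proof.
case=> r0 H rr; split; first exact: le_trans rr.
by move=> D uD; apply: le_trans (H D uD) rr.
Qed.

Lemma l2_le_pt xi r h : l2_le xi r -> normc (xi h) <= r.
Proof.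
case=> _ /(_ [:: h] isT); rewrite /sqsum big_seq1 sqrtr_sqr ger0_norm //.
exact: normc_ge0.
Qed.

Lemma l2_le_dom (v w : G -> C) r :
  (forall h, normc (v h) <= normc (w h)) -> l2_le w r -> l2_le v r.
Proof.
move=> H [r0 Hw]; split => // D uD; apply: le_trans (Hw D uD).
apply: ler_wsqrtr; apply: ler_sum => g _.
by apply: lerXn2r; rewrite ?nnegrE ?normc_ge0.
Qed.

Lemma l2_leD (a b : G -> C) r1 r2 :
  l2_le a r1 -> l2_le b r2 -> l2_le (fun h => a h + b h) (r1 + r2).
Proof.
case=> r10 H1 [r20 H2]; split; first exact: addr_ge0.
by move=> D uD; apply: le_trans (sqrt_sqsumD a b D) _; apply: lerD; auto.
Qed.

Lemma l2_leN (a : G -> C) r : l2_le a r -> l2_le (fun h => - a h) r.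
Proof. by apply: l2_le_dom => h; rewrite normcN. Qed.

Lemma l2_leZ (a : G -> C) c r :
  l2_le a r -> l2_le (fun h => c * a h) (normc c * r).
Proof.
case=> r0 H; split; first by rewrite mulr_ge0 ?normc_ge0.
move=> D uD; have -> : sqsum (fun h => c * a h) D = normc c ^+ 2 * sqsum a D.
  by rewrite /sqsum mulr_sumr; apply: eq_bigr => g _; rewrite normcM exprMn.
rewrite sqrtrM ?sqr_ge0 // sqrtr_sqr ger0_norm ?normc_ge0 //.
by apply: ler_wpM2l; [exact: normc_ge0 | exact: H].
Qed.

Lemma l2_le_approx xi r : 0 <= r -> (forall t, 0 < t -> l2_le xi (r + t)) ->
  l2_le xi r.
Proof.
move=> r0 H; split => // D uD; apply/ler_addgt0Pr => t t0.
by case: (H t t0) => _ /(_ D uD).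
Qed.

Lemma l2_le0 r : 0 <= r -> l2_le (fun _ : G => 0 : C) r.
Proof.
move=> r0; split => // D uD; rewrite /sqsum big1 ?sqrtr0 // => g _.
by rewrite normc0 expr0n.
Qed.

Lemma op_le_ge0 T r : op_le T r -> 0 <= r.
Proof. by move=> /(_ _ (l2_le0 ler01)) []. Qed.

Lemma op_le_of_opnorm_lt T e : (opnorm T < e%:E)%E -> op_le T e.
Proof. by move=> /ltW /opnorm_leP. Qed.

Lemma opnorm_lt_of_op_le T r e : op_le T r -> r < e -> (opnorm T < e%:E)%E.
Proof. by move=> /opnorm_leP H re; apply: le_lt_trans H _; rewrite lte_fin. Qed.

Lemma op_le_trans T r r' : op_le T r -> r <= r' -> op_le T r'.
Proof. by move=> H rr xi /H /l2_le_trans; apply. Qed.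

Lemma op_le_ext T S r : (forall xi h, T xi h = S xi h) -> op_le T r -> op_le S r.
Proof.
move=> E H xi /H; rewrite (_ : T xi = S xi) //; apply: funext => h; exact: E.
Qed.

Lemma op_leD T S r1 r2 : op_le T r1 -> op_le S r2 ->
  op_le (fun xi h => T xi h + S xi h) (r1 + r2).
Proof. by move=> H1 H2 xi xi1; apply: l2_leD; [exact: H1|exact: H2]. Qed.

Lemma op_leN T r : op_le T r -> op_le (fun xi h => - T xi h) r.
Proof. by move=> H xi xi1; apply: l2_leN; exact: H. Qed.

Lemma op_leB T S r1 r2 : op_le T r1 -> op_le S r2 -> op_le (opsub T S) (r1 + r2).
Proof. by move=> H1 H2; apply: op_leD H1 (op_leN H2). Qed.

Lemma op_leZ T c r : op_le T r -> op_le (fun xi h => c * T xi h) (normc c * r).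
Proof. by move=> H xi xi1; apply: l2_leZ; exact: H. Qed.

Lemma op_le_approx T r : 0 <= r -> (forall t, 0 < t -> op_le T (r + t)) ->
  op_le T r.
Proof. by move=> r0 H xi xi1; apply: l2_le_approx => // t t0; exact: H. Qed.

End L2Bounds.

Section LinearCombinations.
Variables (R : realType) (G : groupType) (sigma : G -> G -> R[i]).
Local Notation C := R[i].
Implicit Types (s : seq (C * G)) (phi : G -> C) (xi : G -> C).

Definition neg_lc s := [seq (- p.1, p.2) | p <- s].
Definition scale_lc (c : C) s := [seq (c * p.1, p.2) | p <- s].

Lemma lincomb_nil xi h : lincomb sigma [::] xi h = 0.
Proof. by rewrite /lincomb big_nil. Qed.

Lemma lincomb_cons p s xi h :
  lincomb sigma (p :: s) xi h = p.1 * Lambda sigma p.2 xi h + lincomb sigma s xi h.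
Proof. by rewrite /lincomb big_cons. Qed.

Lemma lincomb_cat s1 s2 xi h :
  lincomb sigma (s1 ++ s2) xi h = lincomb sigma s1 xi h + lincomb sigma s2 xi h.
Proof. by rewrite /lincomb big_cat. Qed.

Lemma lincomb_neg s xi h : lincomb sigma (neg_lc s) xi h = - lincomb sigma s xi h.
Proof. by rewrite /lincomb big_map -sumrN; apply: eq_bigr => p _; rewrite mulNr. Qed.

Lemma lincomb_scale c s xi h :
  lincomb sigma (scale_lc c s) xi h = c * lincomb sigma s xi h.
Proof.
by rewrite /lincomb big_map mulr_sumr; apply: eq_bigr => p _; rewrite mulrA.
Qed.

Lemma opsub_lincomb s1 s2 :
  opsub (lincomb sigma s1) (lincomb sigma s2) = lincomb sigma (s1 ++ neg_lc s2).
Proof.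
apply: funext => xi; apply: funext => h.
by rewrite /opsub lincomb_cat lincomb_neg.
Qed.

Lemma mult_cat phi s1 s2 : mult phi (s1 ++ s2) = mult phi s1 ++ mult phi s2.
Proof. exact: map_cat. Qed.

Lemma mult_neg phi s : mult phi (neg_lc s) = neg_lc (mult phi s).
Proof. by rewrite /mult /neg_lc -!map_comp; apply: eq_map => p /=; rewrite mulrN. Qed.

Lemma mult_scale phi c s : mult phi (scale_lc c s) = scale_lc c (mult phi s).
Proof.
by rewrite /mult /scale_lc -!map_comp; apply: eq_map => p /=; rewrite mulrCA.
Qed.

Lemma opsub_lincomb_mult phi s1 s2 :
  opsub (lincomb sigma (mult phi s1)) (lincomb sigma (mult phi s2)) =
  lincomb sigma (mult phi (s1 ++ neg_lc s2)).
Proof. by rewrite mult_cat mult_neg opsub_lincomb. Qed.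

Lemma lincomb_mult_sub1 phi s xi h :
  lincomb sigma [seq ((phi p.2 - 1) * p.1, p.2) | p <- s] xi h =
  lincomb sigma (mult phi s) xi h - lincomb sigma s xi h.
Proof.
by rewrite /lincomb /mult !big_map -sumrB; apply: eq_bigr => p _ /=; ring.
Qed.

Lemma lincomb_seq (c : G -> C) F xi h :
  lincomb sigma [seq (c g, g) | g <- F] xi h =
  \sum_(g <- F) c g * Lambda sigma g xi h.
Proof. by rewrite /lincomb big_map. Qed.

Lemma opsub_lincomb_subseq (c : G -> C) F F0 xi h :
  uniq F -> uniq F0 -> {subset F0 <= F} ->
  opsub (lincomb sigma [seq (c g, g) | g <- F])
        (lincomb sigma [seq (c g, g) | g <- F0]) xi h =
  lincomb sigma [seq (c g, g) | g <- [seq g <- F | g \notin F0]] xi h.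
Proof.
move=> uF uF0 sub; rewrite /opsub !lincomb_seq.
have pe : perm_eq F (F0 ++ [seq g <- F | g \notin F0]).
  apply: uniq_perm => //.
    rewrite cat_uniq uF0 filter_uniq // andbT /=; apply/hasPn => g.
    by rewrite mem_filter => /andP[].
  move=> g; rewrite mem_cat mem_filter.
  by case gF0: (g \in F0) => //=; rewrite (sub _ gF0).
by rewrite (perm_big _ pe) big_cat /= addrC addrK.
Qed.

(* MAnorm only sees the unit ball; other balls are reached by scaling. *)
Lemma op_le_mult phi B s r : (MAnorm sigma phi <= B%:E)%E -> 0 <= B ->
  op_le (lincomb sigma s) r -> op_le (lincomb sigma (mult phi s)) (B * r).
Proof.
move=> HB B0 H; have r0 := op_le_ge0 H.
have scaled u : 0 < u -> op_le (lincomb sigma s) u ->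
    op_le (lincomb sigma (mult phi s)) (B * u).
  move=> u0 Hu; set s' := scale_lc (u^-1)%:C s.
  have Hs' : op_le (lincomb sigma s') 1.
    have := op_leZ (u^-1)%:C Hu.
    rewrite normcR ger0_norm ?invr_ge0 ?ltW // mulVf ?gt_eqF //.
    by apply: op_le_ext => xi h; rewrite lincomb_scale.
  have : (opnorm (lincomb sigma (mult phi s')) <= B%:E)%E.
    apply: le_trans HB; apply: ereal_sup_ubound; exists s' => //=.
    exact/opnorm_leP.
  move/opnorm_leP; rewrite mult_scale => HM.
  have := op_leZ u%:C HM; rewrite normcR ger0_norm ?ltW // mulrC.
  apply: op_le_ext => xi h.
  by rewrite lincomb_scale mulrA -rmorphM /= mulfV ?gt_eqF // mul1r.
apply: op_le_approx; first exact: mulr_ge0.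
move=> t t0; have B10 : 0 < B + 1 by lra.
have u0 : 0 < r + t / (B + 1) by rewrite ltr_pwDr // divr_gt0.
apply: op_le_trans (scaled _ u0 (op_le_trans H _)) _.
  by rewrite lerDl divr_ge0 ?ltW.
rewrite mulrDr lerD2l mulrA ler_pdivrMr // mulrC ler_pM2l //; lra.
Qed.

Lemma op_le_mult_approx phi B x s1 s2 r1 r2 :
  (MAnorm sigma phi <= B%:E)%E -> 0 <= B ->
  op_le (opsub x (lincomb sigma s1)) r1 -> op_le (opsub x (lincomb sigma s2)) r2 ->
  op_le (opsub (lincomb sigma (mult phi s1)) (lincomb sigma (mult phi s2)))
        (B * (r1 + r2)).
Proof.
move=> HB B0 H1 H2; rewrite opsub_lincomb_mult; apply: op_le_mult HB B0 _.
rewrite -opsub_lincomb [r1 + r2]addrC.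
apply: op_le_ext (op_leB H2 H1) => xi h; rewrite /opsub; ring.
Qed.

Section Unimodular.
Hypothesis sigma_unimodular : forall g h, normc (sigma g h) = 1.

Lemma l2_le_Lambda g xi r : l2_le xi r -> l2_le (Lambda sigma g xi) r.
Proof.
move=> [r0 H]; split => // D uD.
have -> : sqsum (Lambda sigma g xi) D = sqsum xi (map (fun h => g^-1 * h)%g D).
  by rewrite /sqsum big_map; apply: eq_bigr => h _;
    rewrite /Lambda normcM sigma_unimodular mul1r.
by apply: H; rewrite map_inj_uniq //; exact: mulgI.
Qed.

Lemma op_le_lincomb s : op_le (lincomb sigma s) (\sum_(p <- s) normc p.1).
Proof.
elim: s => [|p s IH] xi xi1.
  rewrite big_nil (_ : lincomb sigma [::] xi = fun _ => 0); first exact: l2_le0.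
  by apply: funext => h; rewrite lincomb_nil.
rewrite big_cons (_ : lincomb sigma (p :: s) xi =
   fun h => p.1 * Lambda sigma p.2 xi h + lincomb sigma s xi h).
  apply: l2_leD; last exact: IH.
  by rewrite -[normc p.1]mulr1; apply: l2_leZ; exact: l2_le_Lambda.
by apply: funext => h; rewrite lincomb_cons.
Qed.

Definition abs_lc s := [seq ((normc p.1)%:C, p.2) | p <- s].

Lemma normc_lincomb_le_untwisted s xi h :
  normc (lincomb sigma s xi h) <=
  normc (lincomb (@trivial_cocycle R G) (abs_lc s) (fun g => (normc (xi g))%:C) h).
Proof.
set W := \sum_(p <- s) normc p.1 * normc (xi (p.2^-1 * h)%g).
have W0 : 0 <= W by apply: sumr_ge0 => p _; rewrite mulr_ge0 ?normc_ge0.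
have -> : lincomb (@trivial_cocycle R G) (abs_lc s)
            (fun g => (normc (xi g))%:C) h = W%:C.
  rewrite /lincomb big_map rmorph_sum; apply: eq_bigr => p _.
  by rewrite /Lambda /trivial_cocycle mul1r rmorphM.
rewrite normcR ger0_norm // /W; elim: s {W W0} => [|p s IH].
  by rewrite lincomb_nil big_nil normc0.
rewrite lincomb_cons big_cons; apply: le_trans (le_normcD _ _) _; apply: lerD => //.
by rewrite normcM /Lambda normcM sigma_unimodular mul1r.
Qed.

Lemma op_le_of_untwisted s r :
  op_le (lincomb (@trivial_cocycle R G) (abs_lc s)) r -> op_le (lincomb sigma s) r.
Proof.
move=> H xi xi1.
have : l2_le (fun g => (normc (xi g))%:C) 1.
  by apply: l2_le_dom xi1 => h; rewrite normcR ger0_norm ?normc_ge0.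
move/H; apply: l2_le_dom => h; exact: normc_lincomb_le_untwisted.
Qed.

End Unimodular.
End LinearCombinations.

Section Completeness.
Variables (R : realType) (G : groupType).
Local Notation C := R[i].

(* For a sequence with |f m - f n| <= 1/(n+1) (n <= m), the values
   f n - 1/(n+1) stay below its limit and come within 2/(n+1) of it. *)
Definition cauchy_lim (f : nat -> R) : R :=
  sup [set f n - n.+1%:R^-1 | n in [set: nat]].

Lemma cauchy_limP f : (forall n m, (n <= m)%N -> `|f m - f n| <= n.+1%:R^-1) ->
  forall n, `|cauchy_lim f - f n| <= n.+1%:R^-1.
Proof.
move=> H n; set E := [set f n - n.+1%:R^-1 | n in [set: nat]].
have hs : has_sup E.
  split; first by exists (f 0%N - 1%:R^-1); exists 0%N.
  exists (f 0%N + 1) => _ [m _ <-].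
  have := H 0%N m isT; rewrite ler_norml invr1 => /andP[_ h].
  have : 0 <= m.+1%:R^-1 :> R by rewrite invr_ge0.
  move: (m.+1%:R^-1) => i ? ; lra.
have up : cauchy_lim f <= f n + n.+1%:R^-1.
  apply: ge_sup; first by case: hs.
  move=> _ [m _ <-].
  have i0 : 0 <= m.+1%:R^-1 :> R by rewrite invr_ge0.
  have i1 : 0 <= n.+1%:R^-1 :> R by rewrite invr_ge0.
  case: (leqP m n) => [mn|/ltnW nm].
    have := H m n mn; rewrite ler_norml => /andP[h1 h2].
    move: i0 i1 h1 h2; move: (m.+1%:R^-1) (n.+1%:R^-1) => a b; lra.
  have := H n m nm; rewrite ler_norml => /andP[h1 h2].
  move: i0 i1 h1 h2; move: (m.+1%:R^-1) (n.+1%:R^-1) => a b; lra.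
have lo : f n - n.+1%:R^-1 <= cauchy_lim f.
  by apply: sup_upper_bound => //; exists n.
move: up lo; rewrite ler_norml; move: (n.+1%:R^-1) => a ? ?.
by apply/andP; split; lra.
Qed.

Definition cauchy_limc (u : nat -> C) : C :=
  cauchy_lim (fun n => complex.Re (u n)) +i* cauchy_lim (fun n => complex.Im (u n)).

Lemma cauchy_limcP u :
  (forall n m, (n <= m)%N -> normc (u m - u n) <= n.+1%:R^-1) ->
  forall n, normc (cauchy_limc u - u n) <= 2 * n.+1%:R^-1.
Proof.
move=> H n.
have ReC k m : (k <= m)%N ->
    `|complex.Re (u m) - complex.Re (u k)| <= k.+1%:R^-1.
  move=> km; apply: le_trans (H k m km).
  by case: (u m) (u k) => a b [c d]; exact: (normr_Re_le_normc ((a - c) +i* (b - d))).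
have ImC k m : (k <= m)%N ->
    `|complex.Im (u m) - complex.Im (u k)| <= k.+1%:R^-1.
  move=> km; apply: le_trans (H k m km).
  by case: (u m) (u k) => a b [c d]; exact: (normr_Im_le_normc ((a - c) +i* (b - d))).
have := cauchy_limP ReC n; have := cauchy_limP ImC n.
rewrite /cauchy_limc; case: (u n) => a b /= r2 r1.
apply: le_trans (normc_le_ReIm _ _) _; rewrite mulr2n mulrDl mul1r; exact: lerD.
Qed.

(* The pointwise limit is the candidate; on a finite set D it is approached
   uniformly, which is enough to pass the l^2 bound to the limit. *)
Lemma op_cauchy_cvg (T : nat -> op R G) :
  (forall n m, (n <= m)%N -> op_le (opsub (T m) (T n)) n.+1%:R^-1) ->
  exists y, forall n, op_le (opsub y (T n)) n.+1%:R^-1.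
Proof.
move=> H; exists (fun xi h => cauchy_limc (fun n => T n xi h)) => n xi xi1.
split; first by rewrite invr_ge0.
move=> D uD; apply/ler_addgt0Pr => t t0.
have [k Hk] :=
  @archi_inv_lt R ((size D)%:R * 2) t (mulr_ge0 (ler0n _ _) (ler0n _ _)) t0.
set m := maxn n k.
have Hsz : (size D)%:R * (2 * m.+1%:R^-1) <= t.
  rewrite mulrA; apply/ltW/(le_lt_trans _ Hk).
  by apply: ler_wpM2l; [rewrite mulr_ge0 | exact/invSn_le/leq_maxr].
have -> : sqsum (opsub (fun xi h => cauchy_limc (fun n => T n xi h)) (T n) xi) D =
  sqsum (fun h => (T m xi h - T n xi h) +
                 (cauchy_limc (fun n => T n xi h) - T m xi h)) D.
  by apply: eq_bigr => g _; congr (normc _ ^+ 2); rewrite /opsub; ring.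
apply: le_trans (sqrt_sqsumD _ _ _) _; apply: lerD.
  by case: (H n m (leq_maxl n k) xi xi1) => _; apply.
apply: le_trans (sqsum_le_size _ _ _) Hsz; first by rewrite mulr_ge0 // invr_ge0.
move=> g; apply: cauchy_limcP => a b ab.
exact: (l2_le_pt g (H a b ab xi xi1)).
Qed.

End Completeness.

Section Extension.
Variables (R : realType) (G : groupType) (sigma : G -> G -> R[i]).
Local Notation C := R[i].

Lemma Mext_exists (phi : G -> C) B : (MAnorm sigma phi <= B%:E)%E -> 0 < B ->
  forall x, in_Cr sigma x -> exists y, Mext sigma phi x y.
Proof.
move=> HB B0 x xC.
pose en n := n.+1%:R^-1 / (2 * B).
have en0 n : 0 < en n by rewrite divr_gt0 ?invr_gt0 ?ltr0n ?mulr_gt0.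
have Ben n : B * en n = n.+1%:R^-1 / 2.
  by rewrite /en; field; rewrite addrC natr1 pnatr_eq0 (gt_eqF B0).
have [sn Hsn] := boolp.choice (fun n => xC _ (en0 n)).
have approx n : op_le (opsub x (lincomb sigma (sn n))) (en n).
  exact: op_le_of_opnorm_lt.
have [y Hy] : exists y, forall n,
    op_le (opsub y (lincomb sigma (mult phi (sn n)))) n.+1%:R^-1.
  apply: op_cauchy_cvg => n m nm.
  apply: op_le_trans (op_le_mult_approx HB (ltW B0) (approx m) (approx n)) _.
  rewrite mulrDr !Ben [leRHS]splitr lerD2r ler_pM2r ?invSn_le //.
exists y => e e0.
exists (e / (4 * B)); first by rewrite divr_gt0 ?mulr_gt0.
move=> s /op_le_of_opnorm_lt Hs.
have [n hn] := @archi_inv_lt R 1 (e / 4) ler01 (divr_gt0 e0 (ltr0n _ 4)).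
rewrite mul1r in hn.
apply: (@opnorm_lt_of_op_le _ _ _ (n.+1%:R^-1 + B * (en n + e / (4 * B)))).
  apply: op_le_ext (op_leD (Hy n) (op_le_mult_approx HB (ltW B0) (approx n) Hs)).
  by move=> xi h; rewrite /opsub; ring.
rewrite mulrDr Ben (_ : B * (e / (4 * B)) = e / 4); last by field; rewrite gt_eqF.
move: hn; move: (n.+1%:R^-1) => a; lra.
Qed.

End Extension.

Section FourierSeries.
Variables (R : realType) (G : groupType).
Local Notation C := R[i].

Lemma sqsum_delta_e D : uniq D -> sqsum (@delta_e R G) D = (1%g \in D)%:R.
Proof.
elim: D => [|g D IH] /=; first by rewrite /sqsum big_nil.
move=> /andP[gD uD]; rewrite /sqsum big_cons -/(sqsum _ D) IH // in_cons /delta_e.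
case: (eqVneq g 1%g) => [eg|_]; last by rewrite normc0 expr0n add0r.
by subst g; rewrite (negbTE gD) normc1 expr1n addr0.
Qed.

Lemma l2_le_delta_e : l2_le (@delta_e R G) 1.
Proof.
split => // D uD; rewrite sqsum_delta_e // sqrtr_le_sqr ?ler0n //.
by rewrite expr1n lern1 leq_b1.
Qed.

Lemma l2_le_tail (xi : G -> C) M : l2_le xi M -> forall e, 0 < e ->
  exists F0 : seq G, uniq F0 /\
    forall D, uniq D -> (forall g, g \in D -> g \notin F0) -> sqsum xi D <= e.
Proof.
case=> M0 HM e e0; set E := [set sqsum xi D | D in [set D | uniq D]].
have hs : has_sup E.
  split; first by exists (sqsum xi [::]); exists [::].
  by exists (M ^+ 2) => _ [D uD <-]; rewrite -sqrtr_le_sqr ?sqsum_ge0 //; exact: HM.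
have [_ [D0 uD0 <-] h0] := sup_adherent e0 hs.
exists D0; split => // D uD HD.
have u : uniq (D0 ++ D).
  by rewrite cat_uniq uD0 uD andbT /=; apply/hasPn => g /HD.
have : sqsum xi (D0 ++ D) <= sup E by apply: sup_upper_bound => //; exists (D0 ++ D).
rewrite /sqsum big_cat /= -!/(sqsum _ _); lra.
Qed.

(* A Cauchy net indexed by finite subsets of G converges: along an increasing
   sequence F n of witnesses the values form a Cauchy sequence, whose limit is
   also the limit of the net. *)
Lemma finset_net_cvg (P : seq G -> op R G) :
  (forall t, 0 < t -> exists F0 : seq G, uniq F0 /\
     forall F, uniq F -> {subset F0 <= F} -> op_le (opsub (P F) (P F0)) t) ->
  exists y, forall e, 0 < e -> exists F0 : seq G,
    forall F, uniq F -> {subset F0 <= F} -> (opnorm (opsub y (P F)) < e%:E)%E.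
Proof.
move=> cauchy.
have tn0 n : 0 < n.+1%:R^-1 / 2 :> R by rewrite divr_gt0 // invr_gt0.
have [G0 HG0] := boolp.choice (fun n => cauchy _ (tn0 n)).
pose F := fix F n := if n is n'.+1 then undup (F n' ++ G0 n) else G0 0%N.
have uF n : uniq (F n) by case: n => [|n] /=; [case: (HG0 0%N) | exact: undup_uniq].
have GF n : {subset G0 n <= F n}.
  by case: n => [|n] //= g gG; rewrite mem_undup mem_cat gG orbT.
have FF n m : (n <= m)%N -> {subset F n <= F m}.
  elim: m => [|m IH]; first by rewrite leqn0 => /eqP ->.
  rewrite leq_eqVlt => /orP[/eqP -> //|]; rewrite ltnS => /IH H g /H gm /=.
  by rewrite mem_undup mem_cat gm.
have near n (F' : seq G) : uniq F' -> {subset F n <= F'} ->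
    op_le (opsub (P F') (P (F n))) n.+1%:R^-1.
  move=> uF' sub; rewrite [n.+1%:R^-1]splitr.
  apply: op_le_ext (op_leB (proj2 (HG0 n) F' uF' _) (proj2 (HG0 n) (F n) (uF n) _)).
  - by move=> xi h; rewrite /opsub; ring.
  - by move=> g /GF /sub.
  - exact: GF.
have [y Hy] : exists y, forall n, op_le (opsub y (P (F n))) n.+1%:R^-1.
  by apply: op_cauchy_cvg => n m nm; apply: near => // g /(FF _ _ nm).
exists y => e e0.
have [n hn] := archi_inv_lt (ler0n R 2) e0.
exists (F n) => F' uF' sub.
apply: opnorm_lt_of_op_le _ hn.
rewrite mulr2n mulrDl mul1r.
apply: op_le_ext (op_leB (Hy n) (near n F' uF' sub)).
by move=> xi h; rewrite /opsub; ring.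
Qed.

Variable sigma : G -> G -> C.
Hypothesis sigma_unimodular : forall g h, normc (sigma g h) = 1.

Lemma hat_l2 x : in_Cr sigma x -> exists M, l2_le (hat x) M.
Proof.
case/(_ 1 ltr01) => s /op_le_of_opnorm_lt /(_ _ l2_le_delta_e) H1.
have H2 := op_le_lincomb sigma_unimodular s l2_le_delta_e.
exists (1 + \sum_(p <- s) normc p.1).
by apply: l2_le_dom (l2_leD H1 H2) => h; rewrite /opsub /hat subrK.
Qed.

Lemma op_le_twisted_sum (kappa : G -> R) K B (phi c : G -> C) F :
  0 <= K -> 0 <= B -> (forall g, 1 <= kappa g) ->
  (forall g, normc (phi g) * kappa g <= B) ->
  (forall (F : seq G) (f : G -> C), uniq F ->
    (opnorm (lincomb (@trivial_cocycle R G) [seq (f g, g) | g <- F])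
      <= (K * Num.sqrt (\sum_(g <- F) (normc (f g) * kappa g) ^+ 2))%:E)%E) ->
  uniq F ->
  op_le (lincomb sigma [seq (phi g * c g, g) | g <- F])
        (K * B * Num.sqrt (sqsum c F)).
Proof.
move=> K0 B0 kappa1 phikappa decay uF.
apply: (op_le_of_untwisted sigma_unimodular).
have := decay F (fun g => (normc (phi g * c g))%:C) uF; move/opnorm_leP.
rewrite (_ : [seq (_, g) | g <- F] = abs_lc [seq (phi g * c g, g) | g <- F]);
  last by rewrite /abs_lc -map_comp.
move/op_le_trans; apply; rewrite -mulrA; apply: ler_wpM2l => //.
rewrite -[B in X in _ <= X]ger0_norm // -sqrtr_sqr -sqrtrM ?sqr_ge0 //.
apply: ler_wsqrtr; rewrite /sqsum mulr_sumr; apply: ler_sum => g _.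
rewrite normcR ger0_norm ?normc_ge0 // -exprMn.
apply: lerXn2r; rewrite ?nnegrE ?mulr_ge0 ?normc_ge0 //.
  by apply: le_trans (kappa1 g); rewrite ler01.
by rewrite normcM mulrAC; apply: ler_wpM2r; [exact: normc_ge0 | exact: phikappa].
Qed.

Lemma in_MCF_of_decaying (phi : G -> C) (kappa : G -> R) B :
  (forall g, 1 <= kappa g) -> decaying kappa ->
  (forall g, normc (phi g) * kappa g <= B) -> in_MCF sigma phi.
Proof.
move=> kappa1 [K decay] phikappa x xC.
have [M HM] := hat_l2 xC.
pose K' := Num.max K 0; pose B' := Num.max B 0.
have K'0 : 0 <= K' by rewrite le_max lexx orbT.
have B'0 : 0 <= B' by rewrite le_max lexx orbT.
have decay' F (f : G -> C) : uniq F ->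
    (opnorm (lincomb (@trivial_cocycle R G) [seq (f g, g) | g <- F])
      <= (K' * Num.sqrt (\sum_(g <- F) (normc (f g) * kappa g) ^+ 2))%:E)%E.
  move=> uF; apply: le_trans (decay F f uF) _; rewrite lee_fin.
  by apply: ler_wpM2r; [exact: sqrtr_ge0 | rewrite le_max lexx].
have phikappa' g : normc (phi g) * kappa g <= B'.
  by apply: le_trans (phikappa g) _; rewrite le_max lexx.
pose P F := lincomb sigma [seq (phi g * hat x g, g) | g <- F].
apply: (finset_net_cvg (P := P)) => t t0.
have KB10 : 0 < K' * B' + 1 by rewrite ltr_pwDr // mulr_ge0.
have eps0 : 0 < (t / (K' * B' + 1)) ^+ 2 by rewrite exprn_gt0 // divr_gt0.
have [F0 [uF0 tail]] := l2_le_tail HM eps0.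
exists F0; split => // F uF sub.
set Fc := [seq g <- F | g \notin F0].
apply: (@op_le_ext _ _ (P Fc)).
  by move=> xi h; rewrite /P opsub_lincomb_subseq.
have uFc : uniq Fc by exact: filter_uniq.
apply: op_le_trans (op_le_twisted_sum (hat x) K'0 B'0 kappa1 phikappa' decay' uFc) _.
have small : Num.sqrt (sqsum (hat x) Fc) <= t / (K' * B' + 1).
  rewrite sqrtr_le_sqr ?sqsum_ge0 ?divr_ge0 ?(ltW t0) ?(ltW KB10) //.
  by apply: tail => // g; rewrite mem_filter => /andP[].
apply: le_trans (ler_wpM2l (mulr_ge0 K'0 B'0) small) _.
rewrite mulrA ler_pdivrMr //; nra.
Qed.

End FourierSeries.

Lemma directed_eventually_all (A : Type) (le : A -> A -> Prop) (T : eqType)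
    (P : T -> A -> Prop) :
  directed le -> (forall t, exists a0, forall a, le a0 a -> P t a) ->
  forall L : seq T, exists a0, forall a, le a0 a -> forall t, t \in L -> P t a.
Proof.
case=> [[a_] _ le_trans_ le_upper] HP; elim => [|t L [a1 H1]].
  by exists a_ => a _ t; rewrite in_nil.
have [a2 H2] := HP t; have [c [c1 c2]] := le_upper a1 a2.
exists c => a ca t'; rewrite in_cons => /orP[/eqP->|tL].
  by apply: H2; exact: le_trans_ c2 ca.
by apply: H1 => //; exact: le_trans_ c1 ca.
Qed.

Section Convergence.
Variables (R : realType) (G : groupType) (sigma : G -> G -> R[i]).
Local Notation C := R[i].
Hypothesis sigma_unimodular : forall g h, normc (sigma g h) = 1.

Lemma op_le_mult_sub1 (phi : G -> C) s eta :
  (forall p, p \in s -> normc (phi p.2 - 1) <= eta) ->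
  op_le (opsub (lincomb sigma (mult phi s)) (lincomb sigma s))
        (eta * \sum_(p <- s) normc p.1).
Proof.
move=> H; apply: (op_le_ext (lincomb_mult_sub1 sigma phi s)).
apply: op_le_trans (op_le_lincomb sigma_unimodular _) _.
rewrite big_map mulr_sumr big_seq_cond [leRHS]big_seq_cond.
apply: ler_sum => p /andP[ps _] /=.
by rewrite normcM; apply: ler_wpM2r; [exact: normc_ge0 | exact: H].
Qed.

Lemma Mext_net_cvg (A : Type) (le : A -> A -> Prop) (phi : A -> G -> C) B :
  directed le -> (forall a, (MAnorm sigma (phi a) <= B%:E)%E) -> 0 < B ->
  (forall g e, 0 < e -> exists a0, forall a, le a0 a -> normc (phi a g - 1) < e) ->
  forall x, in_Cr sigma x -> forall e, 0 < e -> exists a0, forall a, le a0 a ->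
    forall y, Mext sigma (phi a) x y -> (opnorm (opsub y x) < e%:E)%E.
Proof.
move=> dirA HB B0 phi1 x xC e e0.
have B10 : 0 < B + 1 by lra.
pose d := e / (8 * (B + 1)).
have d0 : 0 < d by rewrite divr_gt0 ?mulr_gt0.
have [s /op_le_of_opnorm_lt xs] := xC _ d0.
pose S := \sum_(p <- s) normc p.1.
have S0 : 0 <= S by apply: sumr_ge0 => p _; exact: normc_ge0.
have S10 : 0 < S + 1 by lra.
pose eta := e / (4 * (S + 1)).
have eta0 : 0 < eta by rewrite divr_gt0 // mulr_gt0.
have [a0 Ha0] : exists a0, forall a, le a0 a ->
    forall g, g \in [seq p.2 | p <- s] -> normc (phi a g - 1) <= eta.
  apply: directed_eventually_all dirA _ _ => g.
  by have [a0 H] := phi1 g eta eta0; exists a0 => a /H /ltW.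
exists a0 => a aa0 y My.
have e40 : 0 < e / 4 by rewrite divr_gt0.
have [d' d'0 Hd'] := My (e / 4) e40.
have dmin0 : 0 < Num.min d' d by rewrite lt_min d'0 d0.
have [s2 xs2] := xC _ dmin0.
have y_s2 : op_le (opsub y (lincomb sigma (mult (phi a) s2))) (e / 4).
  apply/op_le_of_opnorm_lt/Hd'/(lt_le_trans xs2).
  by rewrite lee_fin ge_min lexx.
have s2_s : op_le (opsub (lincomb sigma (mult (phi a) s2))
                         (lincomb sigma (mult (phi a) s))) (e / 4).
  have xs2' : op_le (opsub x (lincomb sigma s2)) d.
    by apply: op_le_trans (op_le_of_opnorm_lt xs2) _; rewrite ge_min lexx orbT.
  apply: op_le_trans (op_le_mult_approx (HB a) (ltW B0) xs2' xs) _.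
  have -> : B * (d + d) = e / 4 * (B / (B + 1)) by rewrite /d; field; rewrite gt_eqF.
  by rewrite ger_pMr // ler_pdivrMr //; lra.
have s_1 : op_le (opsub (lincomb sigma (mult (phi a) s)) (lincomb sigma s)) (e / 4).
  apply: op_le_trans (op_le_mult_sub1 (eta := eta) _) _.
    by move=> p ps; apply: Ha0 => //; exact: map_f.
  rewrite -/S /eta.
  have -> : e / (4 * (S + 1)) * S = e / 4 * (S / (S + 1)) by field; rewrite gt_eqF.
  by rewrite ger_pMr // ler_pdivrMr //; lra.
have d_le : d <= e / 8.
  rewrite /d ler_pdivrMr ?mulr_gt0 //.
  have -> : e / 8 * (8 * (B + 1)) = e * (B + 1) by field.
  nra.
apply: (@opnorm_lt_of_op_le _ _ _ (e / 4 + e / 4 + e / 4 + d)); last lra.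
apply: op_le_ext (op_leB (op_leD (op_leD y_s2 s2_s) s_1) xs).
by move=> xi h; rewrite /opsub; ring.
Qed.

End Convergence.

Theorem proposition5p8 (R : realType) (G : groupType)
    (sigma : G -> G -> R[i]) (A : Type) (le : A -> A -> Prop)
    (phi : A -> G -> R[i]) :
  is_cocycle sigma ->
  directed le ->
  (forall a, in_MA sigma (phi a)) ->
  (* (i) phi_a -> 1 pointwise *)
  (forall (g : G) (e : R), 0 < e ->
     exists a0, forall a, le a0 a -> normc (phi a g - 1) < e) ->
  (* (ii) sup_a ||M_{phi_a}|| < oo *)
  (exists B : R, forall a, (MAnorm sigma (phi a) <= B%:E)%E) ->
  (* (iii) *)
  (forall a, exists kappa : G -> R,
     [/\ (forall g, 1 <= kappa g), decaying kappa
       & exists B : R, forall g, normc (phi a g) * kappa g <= B]) ->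
  bounded_Fourier_summing_net sigma le phi.
Proof.
move=> [unimodular _ _] dirA _ phi1 [B0 hB0] hdecay.
pose B := Num.max B0 1.
have Bpos : 0 < B by rewrite lt_max ltr01 orbT.
have hB a : (MAnorm sigma (phi a) <= B%:E)%E.
  by apply: le_trans (hB0 a) _; rewrite lee_fin le_max lexx.
split.
- move=> a; have [kappa [kappa1 decay [Bk phikappa]]] := hdecay a.
  exact: (in_MCF_of_decaying unimodular kappa1 decay phikappa).
- by exists B0.
- by move=> a; apply: Mext_exists (hB a) Bpos.
- exact: (Mext_net_cvg unimodular dirA hB Bpos phi1).
Qed.
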